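(* Let $G$ be a simple cubic graph and $(G',r)$ be constructed from $G$ as described in the context. A set $S\subseteq V(G')$ is a vector connectivity set for $(G',r)$ if and only if for every edge $e=xy$ of $G$, $S$ contains at least one vertex from each of the sets $X_e=\{x,w_{x,e},z_{x,e}\}$, $Z_e=\{z_{x,e},w_e,z_{y,e}\}$ and $Y_e=\{z_{y,e},w_{y,e},y\}$.
   Context: Construction of $G'$ from a cubic graph $G$: start with $G$. (1) For each edge $e=xy$ of $G$, delete $xy$, add three new vertices $w_{x,e},w_e,w_{y,e}$ and the edges $xw_{x,e}, w_{x,e}w_e, w_ew_{y,e}, w_{y,e}y$. (2) For each edge $e=xy$ of $G$, add two new vertices $z_{x,e},z_{y,e}$ and the edges $w_{x,e}z_{x,e}, z_{x,e}w_e, w_ez_{y,e}, z_{y,e}w_{y,e}$. (3) For every vertex $x$ of $G$ with incident edges $e,f,g$, add the edges $w_{x,e}w_{x,f}, w_{x,e}w_{x,g}, w_{x,f}w_{x,g}$. Requirements: for every edge $e=xy$ of $G$, $r(w_{x,e})=r(w_{y,e})=4$ and $r(w_e)=3$; $r(v')=0$ for all other vertices of $G'$. For $S\subseteq V(G')$ and $v\in V(G')\setminus S$, a $v$--$S$ fan of order $k$ is a collection of $k$ paths, each connecting $v$ to a vertex of $S$, pairwise vertex-disjoint except at $v$; $v$ is $k$-linked to $S$ if such a fan exists. A vector connectivity set for $(G',r)$ is a set $S$ such that every $v\in V(G')\setminus S$ is $r(v)$-linked to $S$. *)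

From mathcomp Require Import all_boot.
Set Implicit Arguments. Unset Strict Implicit. Unset Printing Implicit Defensive.

Definition simple_graph (V : finType) (e : rel V) : Prop :=
  irreflexive e /\ symmetric e.

Definition cubic (V : finType) (e : rel V) : Prop :=
  forall x : V, #|[set y | e x y]| = 3.

(* Raw vertex type of G':
     orig x      = the original vertex x of G
     wv x y      = w_{x,e}  for e = xy
     zv x y      = z_{x,e}  for e = xy
     we {x,y}    = w_e      for e = xy  (indexed by the unordered pair) *)
Definition Raw (V : finType) : finType := ((V + (V * V)) + ((V * V) + {set V}))%type.

Definition orig (V : finType) (x : V) : Raw V := inl (inl x).
Definition wv (V : finType) (x y : V) : Raw V := inl (inr (x, y)).
Definition zv (V : finType) (x y : V) : Raw V := inr (inl (x, y)).
Definition we (V : finType) (x y : V) : Raw V := inr (inr [set x; y]).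

Definition inG (V : finType) (e : rel V) (v : Raw V) : bool :=
  match v with
  | inl (inl _) => true
  | inl (inr (a, b)) => e a b
  | inr (inl (a, b)) => e a b
  | inr (inr s) => [exists a : V, exists b : V, e a b && (s == [set a; b])]
  end.

(* The edges of G' added in steps (1),(2),(3), listed in one orientation. *)
Definition base (V : finType) (e : rel V) (u v : Raw V) : bool :=
  match u, v with
  | inl (inl x), inl (inr (a, b)) => (x == a) && e a b
  | inl (inr (a, b)), inr (inr s) => e a b && (s == [set a; b])
  | inl (inr (a, b)), inr (inl (c, d)) => [&& e a b, a == c & b == d]
  | inr (inl (a, b)), inr (inr s) => e a b && (s == [set a; b])
  (* (3) triangle on w_{x,e}, w_{x,f}, w_{x,g} *)
  | inl (inr (a, b)), inl (inr (c, d)) => [&& e a b, e c d, a == c & b != d]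
  | _, _ => false
  end.

Definition adjR (V : finType) (e : rel V) : rel (Raw V) :=
  fun u v => base e u v || base e v u.

Definition adjG (V : finType) (e : rel V) : rel {v : Raw V | inG e v} :=
  fun u v => adjR e (val u) (val v).

Definition rR (V : finType) (v : Raw V) : nat :=
  match v with
  | inl (inr _) => 4
  | inr (inr _) => 3
  | _ => 0
  end.

(* A v--S fan of order k in a graph (T, adj): k paths, given as the sequences
   of vertices following v, each a (simple) path starting at v and ending in S,
   pairwise vertex-disjoint except at v. *)
Definition fan (T : finType) (adj : rel T) (S : {set T}) (v : T)
    (ps : seq (seq T)) : Prop :=
  (forall p, p \in ps -> [/\ path adj v p, uniq (v :: p) & last v p \in S]) /\
  (forall i j, i < size ps -> j < size ps -> i != j ->
     [disjoint (nth [::] ps i) & (nth [::] ps j)]).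

Definition linked (T : finType) (adj : rel T) (k : nat) (v : T) (S : {set T})
  : Prop :=
  exists ps : seq (seq T), size ps = k /\ fan adj S v ps.

Definition vector_connectivity_set (T : finType) (adj : rel T) (r : T -> nat)
    (S : {set T}) : Prop :=
  forall v, v \notin S -> linked adj (r v) v S.

Arguments adjG {V} e.
Arguments adjR {V} e.
Arguments base {V} e.
Arguments inG {V} e.

From mathcomp Require Import all_boot.
Set Implicit Arguments. Unset Strict Implicit. Unset Printing Implicit Defensive.

(* X_e contains w_{x,e}, of requirement 4, and all its edges to the rest of G'
   end in the three vertices w_e, w_{x,f}, w_{x,g}; similarly Z_e contains w_e,
   of requirement 3, and is attached only through w_{x,e}, w_{y,e}.  If S missed
   such a block, the paths of a fan from that vertex would leave the block through
   pairwise distinct boundary vertices, which are too few.  Conversely, if S meets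
   every block, fans are built from walks that hit S, each cut at its first vertex
   in S: from w_{x,e} go into Z_f and Z_g for the two other edges f, g at x, and
   either to x and into Z_e (if x is in S) or to z_{x,e} and through w_e into Y_e;
   from w_e (say z_{x,e} is in S) go to z_{x,e}, into Y_e, and via w_{x,e} and x
   into X_f. *)

Lemma eq_set2l (T : finType) (x a b : T) : ([set x; a] == [set x; b]) = (a == b).
Proof.
apply/eqP/eqP=> [xab | -> //]; have : a \in [set x; b] by rewrite -xab set22.
rewrite !inE => /orP[/eqP ax | /eqP //]; have : b \in [set x; a] by rewrite xab set22.
by rewrite ax !inE orbb => /eqP.
Qed.

Lemma eq_set2_cases (T : finType) (a b c d : T) :
  [set a; b] = [set c; d] -> c != d -> (a == c) && (b == d) || (a == d) && (b == c).
Proof.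
move=> abcd cd; have : c \in [set a; b] by rewrite abcd set21.
have : d \in [set a; b] by rewrite abcd set22.
rewrite !inE => /orP[]/eqP? /orP[]/eqP?; subst; rewrite ?eqxx /= ?orbT //.
all: by rewrite eqxx in cd.
Qed.

Lemma uniq_flatten_cons (T : eqType) (v : T) ss s :
  uniq (v :: flatten ss) -> s \in ss -> uniq (v :: s).
Proof.
rewrite !cons_uniq => /andP[v_ss uniq_ss] sin.
rewrite (contra _ v_ss) => [|vs]; last by apply/flattenP; exists s.
elim: ss uniq_ss sin {v_ss} => // t ss IHss.
by rewrite cat_uniq inE => /and3P[ut _ uss] /orP[/eqP-> // | /(IHss uss)].
Qed.

Lemma uniq_flatten_disjoint (T : finType) (ss : seq (seq T)) :
  uniq (flatten ss) -> pairwise (fun s t => [disjoint s & t]) ss.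
Proof.
elim: ss => //= s ss IHss; rewrite cat_uniq => /and3P[_ s_ss /IHss ->].
rewrite andbT; apply/allP=> t tss; rewrite disjoint_sym disjoint_has.
apply: contra s_ss => /hasP[u ut us]; apply/hasP; exists u => //.
by apply/flattenP; exists t.
Qed.

Definition boundary_sub (T : Type) (pT : predType T) (adj : rel T) (C N : pT) :=
  forall u w, u \in C -> adj u w -> (w \in C) || (w \in N).

Section Fans.
Variables (T : finType) (adj : rel T).

Lemma path_meets_boundary (C N : {set T}) a p :
  boundary_sub adj C N -> a \in C -> path adj a p -> last a p \notin C -> has (mem N) p.
Proof.
move=> closedC; elim: p a => [|b p IHp] a aC /=; first by rewrite aC.
case/andP=> ab bp lastNC; have /orP[bC|bN] := closedC _ _ aC ab.
- by rewrite (IHp b) ?orbT.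
- by rewrite bN.
Qed.

Lemma fan_size_le (S C N : {set T}) v ps :
  boundary_sub adj C N -> v \in C -> [disjoint C & S] -> fan adj S v ps -> size ps <= #|N|.
Proof.
move=> closedC vC CS [ps_paths ps_disj].
have exitN p : p \in ps -> has (mem N) p.
  case/ps_paths=> vp _ lastS; apply: path_meets_boundary closedC vC vp _.
  by apply: contraTN lastS => lastC; rewrite (disjointFr CS lastC).
pose exit (p : seq T) := odflt v [pick u in N | u \in p].
have exitP p : p \in ps -> (exit p \in N) && (exit p \in p).
  move/exitN/hasP=> [u up uN]; have {}uN : u \in N := uN; rewrite /exit.
  by case: pickP => [u' /andP[-> ->] // | /(_ u)]; rewrite uN up.
have uniq_exits : uniq (map exit ps).
  apply/(uniqP v) => i j; rewrite !inE size_map => ilt jlt.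
  rewrite !(nth_map [::]) //; apply: contra_eq => ij.
  have /andP[_ ei] := exitP _ (mem_nth [::] ilt).
  have /andP[_ ej] := exitP _ (mem_nth [::] jlt).
  by apply: contraTneq ej => <-; rewrite (disjointFr (ps_disj i j ilt jlt ij) ei).
rewrite -(size_map exit) -(card_uniqP uniq_exits); apply/subset_leq_card/subsetP.
by move=> u /mapP[p /exitP /andP[uN _] ->].
Qed.

Lemma linked_of_paths (S : {set T}) v (ss : seq (seq T)) :
  (forall s, s \in ss -> path adj v s /\ has (mem S) s) ->
  uniq (v :: flatten ss) -> linked adj (size ss) v S.
Proof.
move=> ss_paths uniq_vss.
have ss_disj : pairwise (fun s t => [disjoint s & t]) ss.
  by case/andP: uniq_vss => _ /uniq_flatten_disjoint.
pose prefix s := rcons (take (find (mem S) s) s) (nth v s (find (mem S) s)).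
exists (map prefix ss); split; first by rewrite size_map.
split=> [_ /mapP[s sin ->] | i j].
  have [vs sS] := ss_paths s sin; have uvs := uniq_flatten_cons uniq_vss sin.
  rewrite /prefix; case: (split_find_nth v sS) vs uvs => x s1 s2 xS _.
  by rewrite cat_path -cat_cons cat_uniq last_rcons => /andP[-> _] /andP[-> _].
rewrite size_map => ilt jlt ij; rewrite !(nth_map [::]) //.
wlog lt_ij : i j ilt jlt ij / i < j.
  move=> wlog_ij; case: (ltngtP i j) => [lt_ij | lt_ji | eq_ij].
  - exact: wlog_ij.
  - by rewrite disjoint_sym wlog_ij // eq_sym.
  - by rewrite eq_ij eqxx in ij.
have := (pairwiseP [::] ss_disj) i j ilt jlt lt_ij.
have prefix_sub s : s \in ss -> prefix s \subset s.
  case/ss_paths=> _ sS; apply/subsetP=> u.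
  by rewrite mem_rcons inE => /orP[/eqP-> | /mem_take //]; rewrite mem_nth -?has_find.
by apply: disjointW; apply/prefix_sub/mem_nth.
Qed.

Lemma linked0 (S : {set T}) v : linked adj 0 v S.
Proof. by exists [::]; split=> //; split=> // i. Qed.

End Fans.

Section Subgraph.
Variables (T : finType) (P : pred T) (adj : rel T).
Local Notation U := {x | P x}.

Lemma exists_val_has (S : {set U}) (L : seq T) :
  [exists v in S, val v \in L] = has (mem (val @: S)) L.
Proof.
apply/existsP/hasP=> [[u /andP[uS uL]] | [a aL /imsetP[u uS aE]]].
  by exists (val u) => //; apply: imset_f.
by exists u; rewrite uS -aE.
Qed.

Lemma fan_val_size_le (S : {set U}) v ps (C N : seq T) :
  boundary_sub adj C N -> val v \in C -> ~~ has (mem (val @: S)) C ->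
  fan (relpre val adj) S v ps -> size ps <= size N.
Proof.
move=> closedC vC CS fan_ps.
pose C' := [set u : U | val u \in C]; pose N' := [set u : U | val u \in N].
have closedC' : boundary_sub (relpre val adj) C' N'.
  by move=> u w; rewrite !inE; apply: closedC.
have C'S : [disjoint C' & S].
  apply/pred0P=> u /=; apply/negbTE/andP=> -[]; rewrite inE => uC uS; case/hasP: CS.
  by exists (val u); rewrite /= ?imset_f.
have vC' : v \in C' by rewrite inE.
apply: leq_trans (fan_size_le closedC' vC' C'S fan_ps) _.
rewrite -(card_imset _ val_inj); apply: leq_trans _ (card_size N).
by apply/subset_leq_card/subsetP=> a /imsetP[u uN ->]; rewrite inE in uN.
Qed.

Lemma linked_val_paths (S : {set U}) v (ss : seq (seq T)) :
  (forall a b, adj a b -> P b) ->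
  (forall s, s \in ss -> path adj (val v) s /\ has (mem (val @: S)) s) ->
  uniq (val v :: flatten ss) -> linked (relpre val adj) (size ss) v S.
Proof.
move=> adjP ss_paths uniq_vss.
have pathP a s : path adj a s -> all P s.
  by elim: s a => //= b s IHs a /andP[/adjP-> /IHs].
pose lift s := map (insubd v) s.
have liftK s : all P s -> map val (lift s) = s.
  by move/allP=> Ps; rewrite -map_comp map_id_in // => a /Ps /= Pa; rewrite insubdK.
rewrite -(size_map lift); apply: linked_of_paths => [_ /mapP[s sin ->] |].
  have [vs sS] := ss_paths s sin; have Ps := pathP _ _ vs.
  split; first by rewrite -(@path_map _ _ val) liftK.
  move: sS; rewrite -{1}(liftK s Ps) has_map.
  by apply: sub_has => u; rewrite /preim /= mem_imset //; apply: val_inj.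
have liftK_ss : map (map val \o lift) ss = ss.
  by apply: map_id_in => s /ss_paths[/pathP /liftK].
by rewrite -(map_inj_uniq val_inj) /= map_flatten -map_comp liftK_ss.
Qed.

End Subgraph.

(* Keeps [/=] from unfolding an adjacency into the raw edge test, so that path
   goals decompose into single edges. *)
Local Arguments adjR : simpl never.

Section Gadget.
Variables (V : finType) (e : rel V).
Hypothesis e_irr : irreflexive e.
Implicit Types (x y a b d : V) (u w : Raw V).
Local Notation adj := (adjR e).

Lemma edge_neq x y : e x y -> x != y.
Proof. by apply: contraTneq => ->; rewrite e_irr. Qed.

Lemma inG_we x y : e x y -> inG e (we x y).
Proof. by move=> xy; apply/existsP; exists x; apply/existsP; exists y; rewrite xy eqxx. Qed.

Lemma adjR_inG u w : adj u w -> inG e w.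
Proof.
case: u w => [[? | [? ?]] | [[? ?] | ?]] [[? | [? ?]] | [[? ?] | s]]; rewrite /adjR //= ?orbF.
all: first [ by case/andP | by case/orP=> /and4P[] | by case/and3P=> ? /eqP<- /eqP<-
           | by case/andP=> ? /eqP->; apply: inG_we ].
Qed.

Lemma we_sym x y : we x y = we y x.
Proof. by rewrite /we setUC. Qed.

Lemma we_eq x a b : (we x a == we x b) = (a == b).
Proof. exact: eq_set2l. Qed.

Lemma adjR_sym : symmetric adj.
Proof. by move=> u w; rewrite /adjR orbC. Qed.

Lemma adj_orig_wv x y : e x y -> adj (orig x) (wv x y).
Proof. by rewrite /adjR /= eqxx => ->. Qed.

Lemma adj_wv_zv x y : e x y -> adj (wv x y) (zv x y).
Proof. by rewrite /adjR /= !eqxx => ->. Qed.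

Lemma adj_wv_we x y : e x y -> adj (wv x y) (we x y).
Proof. by rewrite /adjR /= eqxx => ->. Qed.

Lemma adj_zv_we x y : e x y -> adj (zv x y) (we x y).
Proof. by rewrite /adjR /= eqxx => ->. Qed.

Lemma adj_wv_wv x y z : e x y -> e x z -> y != z -> adj (wv x y) (wv x z).
Proof. by rewrite /adjR /= eqxx => -> -> ->. Qed.

Lemma adj_orig_inv x w : adj (orig x) w -> exists2 d, e x d & w = wv x d.
Proof.
by case: w => [[z | [c d]] | [[c d] | s]]; rewrite /adjR //= orbF => /andP[/eqP<-]; exists d.
Qed.

Lemma adj_zv_inv x y w : adj (zv x y) w -> w = wv x y \/ w = we x y.
Proof.
case: w => [[z | [c d]] | [[c d] | s]]; rewrite /adjR //= ?orbF.
- by case/and3P=> _ /eqP-> /eqP->; left.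
- by case/andP=> _ /eqP->; right.
Qed.

Lemma adj_wv_inv x y w : adj (wv x y) w ->
  [\/ w = orig x, w = zv x y, w = we x y | exists2 d, e x d & w = wv x d].
Proof.
case: w => [[z | [c d]] | [[c d] | s]]; rewrite /adjR //= ?orbF.
- by case/andP=> /eqP-> _; constructor 1.
- by case/orP=> /and4P[? ? /eqP xc _]; subst; constructor 4; exists d.
- by case/and3P=> _ /eqP-> /eqP->; constructor 2.
- by case/andP=> _ /eqP->; constructor 3.
Qed.

Lemma adj_we_inv x y w : adj (we x y) w -> w \in [:: wv x y; wv y x; zv x y; zv y x].
Proof.
case: w => [[z | [c d]] | [[c d] | s]]; rewrite /adjR //= => /andP[cd /eqP/eq_set2_cases].
all: by case/(_ (edge_neq cd))/orP=> /andP[/eqP-> /eqP->]; rewrite !inE eqxx /= ?orbT.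
Qed.

(* For e = xy, [xblock x y] and [zblock x y] are X_e and Z_e; Y_e is
   [rev (xblock y x)]. *)
Definition xblock x y : seq (Raw V) := [:: orig x; wv x y; zv x y].
Definition zblock x y : seq (Raw V) := [:: zv x y; we x y; zv y x].

Lemma has_xblock (A : {pred Raw V}) x y :
  has (mem A) (xblock x y) = [|| orig x \in A, wv x y \in A | zv x y \in A].
Proof. by rewrite /= orbF. Qed.

Lemma has_zblock (A : {pred Raw V}) x y :
  has (mem A) (zblock x y) = [|| zv x y \in A, we x y \in A | zv y x \in A].
Proof. by rewrite /= orbF. Qed.

Lemma xblock_boundary x y f g : (forall d, e x d -> d \in [:: y; f; g]) ->
  boundary_sub adj (xblock x y) [:: we x y; wv x f; wv x g].
Proof.
move=> nbrs u w; rewrite /xblock !inE => /or3P[] /eqP->.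
- case/adj_orig_inv=> d /nbrs; rewrite !inE => /or3P[]/eqP-> ->;
  by rewrite eqxx /= ?orbT.
- case/adj_wv_inv=> [->|->|->|[d /nbrs]]; rewrite ?eqxx /= ?orbT //.
  by rewrite !inE => /or3P[]/eqP-> ->; rewrite eqxx /= ?orbT.
- by case/adj_zv_inv=> ->; rewrite eqxx /= ?orbT.
Qed.

Lemma zblock_boundary x y : boundary_sub adj (zblock x y) [:: wv x y; wv y x].
Proof.
move=> u w; rewrite /zblock !inE => /or3P[]/eqP->.
- by case/adj_zv_inv=> ->; rewrite eqxx /= ?orbT.
- by move/adj_we_inv; rewrite !inE => /or4P[]/eqP->; rewrite eqxx /= ?orbT.
- by case/adj_zv_inv=> ->; rewrite ?[we y x]we_sym eqxx /= ?orbT.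
Qed.

Hypotheses (e_sym : symmetric e) (e_cubic : cubic e).

Lemma cubic_other_nbrs x y : e x y -> exists f g,
  [/\ f != y, g != y, f != g, e x f & e x g] /\ forall d, e x d -> d \in [:: y; f; g].
Proof.
move=> xy; have /cards2P[f [g [fg nbrsE]]] : #|[set d | e x d] :\ y| == 2.
  by have := e_cubic x; rewrite (cardsD1 y) inE xy add1n => -[->].
have := set21 f g; have := set22 f g; rewrite -nbrsE !inE => /andP[gy xg] /andP[fy xf].
exists f, g; split=> // d xd; rewrite !inE; case: eqVneq => //= dy.
have : d \in [set d | e x d] :\ y by rewrite !inE dy.
by rewrite nbrsE !inE.
Qed.

Local Notation G' := {v : Raw V | inG e v}.

Section Necessity.
Variable S : {set G'}.
Hypothesis vcs : vector_connectivity_set (adjG e) (fun v => rR (val v)) S.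

Lemma vcs_hits_region (v : G') (C N : seq (Raw V)) :
  boundary_sub adj C N -> val v \in C -> size N < rR (val v) -> has (mem (val @: S)) C.
Proof.
move=> closedC vC ltN; apply: contraT => CS.
have vS : v \notin S.
  by apply: contra CS => vS; apply/hasP; exists (val v); rewrite //= imset_f.
have [ps [size_ps fan_ps]] := vcs vS.
by move: ltN; rewrite -size_ps ltnNge (fan_val_size_le closedC vC CS fan_ps).
Qed.

Lemma vcs_hits_xblock x y : e x y -> has (mem (val @: S)) (xblock x y).
Proof.
move=> xy; have [f [g [_ nbrs]]] := cubic_other_nbrs xy.
by apply: (vcs_hits_region (v := Sub (wv x y) xy) (xblock_boundary nbrs));
  rewrite SubK // !inE eqxx /= ?orbT.
Qed.

Lemma vcs_hits_zblock x y : e x y -> has (mem (val @: S)) (zblock x y).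
Proof.
move=> xy; apply: (vcs_hits_region (v := Sub (we x y) (inG_we xy)) (@zblock_boundary x y));
  by rewrite SubK // !inE eqxx /= ?orbT.
Qed.

End Necessity.

Ltac adj_edge0 := first [ exact: adj_orig_wv | exact: adj_wv_zv | exact: adj_wv_we
                        | exact: adj_zv_we | exact: adj_wv_wv ].
Ltac adj_edge := first [ adj_edge0 | rewrite adjR_sym; adj_edge0
                       | rewrite we_sym; adj_edge0 | rewrite adjR_sym we_sym; adj_edge0 ].
Ltac gadget_path := rewrite /= ?andbT;
  repeat match goal with |- is_true (_ && _) => apply/andP; split end; adj_edge.

Ltac neq_simpl := repeat match goal with
  | H : is_true (?a != ?b) |- context [?a == ?b] => rewrite (negbTE H)
  | H : is_true (?a != ?b) |- context [?b == ?a] => rewrite [b == a]eq_sym (negbTE H)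
  end.
(* Only [flatten] is simplified up front: a global [/=] here exposes the set
   inside [we], and the kernel then takes very long to recheck the proof. *)
Ltac gadget_uniq := rewrite [flatten _]/= !cons_uniq !inE ?we_eq;
  do ?(rewrite -!sum_eqE /=); rewrite ?xpair_eqE; neq_simpl; rewrite ?eqxx.

Section Sufficiency.
Variable S : {set G'}.
Hypotheses (hit_x : forall x y, e x y -> has (mem (val @: S)) (xblock x y))
           (hit_z : forall x y, e x y -> has (mem (val @: S)) (zblock x y)).

Lemma linked_wv (v : G') x y : v \notin S -> val v = wv x y -> linked (adjG e) 4 v S.
Proof.
move=> vS vE; have xy : e x y by have := valP v; rewrite vE.
have [f [g [[fy gy fg xf xg] _]]] := cubic_other_nbrs xy.
have x_y := edge_neq xy; have x_f := edge_neq xf; have x_g := edge_neq xg.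
have yx : e y x by rewrite e_sym.
have fx : e f x by rewrite e_sym.
have gx : e g x by rewrite e_sym.
have wS : wv x y \notin val @: S by rewrite -vE mem_imset //; apply: val_inj.
have hit_wz d : e x d -> has (mem (val @: S)) (wv x d :: zblock x d).
  by move=> xd; apply/orP; right; apply: hit_z.
have [xS | xNS] := boolP (orig x \in val @: S).
  apply: (@linked_val_paths _ _ (adjR e) S v
           [:: wv x f :: zblock x f; wv x g :: zblock x g; zblock x y; [:: orig x]]).
  - exact: adjR_inG.
  - rewrite vE => s; rewrite !inE => /or4P[]/eqP->; split; try gadget_path.
    + exact: hit_wz.
    + exact: hit_wz.
    + exact: hit_z.
    + by rewrite /= xS.
  - by rewrite vE; gadget_uniq.
have zS : zv x y \in val @: S.
  by move: (hit_x xy); rewrite has_xblock (negbTE xNS) (negbTE wS).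
have hit_y : has (mem (val @: S)) [:: zv y x; wv y x; orig y].
  by rewrite -has_rev; apply: hit_x.
apply: (@linked_val_paths _ _ (adjR e) S v
         [:: wv x f :: zblock x f; wv x g :: zblock x g; [:: zv x y];
             [:: we x y; zv y x; wv y x; orig y]]).
- exact: adjR_inG.
- rewrite vE => s; rewrite !inE => /or4P[]/eqP->; split; try gadget_path.
  + exact: hit_wz.
  + exact: hit_wz.
  + by rewrite /= zS.
  + by apply/orP; right.
- by rewrite vE; gadget_uniq.
Qed.

Lemma linked_we (v : G') x y : v \notin S -> val v = we x y -> e x y ->
  linked (adjG e) 3 v S.
Proof.
move=> vS vE xy; have wS : we x y \notin val @: S.
  by rewrite -vE mem_imset //; apply: val_inj.
wlog zS : x y xy vE wS / zv x y \in val @: S.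
  move=> wlog_zS; move: (hit_z xy); rewrite has_zblock (negbTE wS) orFb => /orP[zS | zS].
    exact: (wlog_zS x y).
  have yx : e y x by rewrite e_sym.
  by rewrite we_sym in vE wS; apply: wlog_zS yx vE wS zS.
have [f [_ [[fy _ _ xf _] _]]] := cubic_other_nbrs xy.
have x_y := edge_neq xy; have x_f := edge_neq xf.
have yx : e y x by rewrite e_sym.
have hit_y : has (mem (val @: S)) [:: zv y x; wv y x; orig y].
  by rewrite -has_rev; apply: hit_x.
apply: (@linked_val_paths _ _ (adjR e) S v
         [:: [:: zv x y]; wv x y :: xblock x f; [:: zv y x; wv y x; orig y]]).
- exact: adjR_inG.
- rewrite vE => s; rewrite !inE => /or3P[]/eqP->; split; try gadget_path.
  + by rewrite /= zS.
  + by apply/orP; right; apply: hit_x.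
  + exact: hit_y.
- by rewrite vE; gadget_uniq.
Qed.

End Sufficiency.

End Gadget.

Theorem mainTheorem4 (V : finType) (e : rel V)
  (Hsimple : simple_graph e) (Hcubic : cubic e)
  (S : {set {v : Raw V | inG e v}}) :
  vector_connectivity_set (adjG e) (fun v => rR (val v)) S <->
  (forall x y : V, e x y ->
     [/\ [exists v in S, val v \in [:: orig x; wv x y; zv x y]],
         [exists v in S, val v \in [:: zv x y; we x y; zv y x]] &
         [exists v in S, val v \in [:: zv y x; wv y x; orig y]]]).
Proof.
have [e_irr e_sym] := Hsimple.
split=> [vcs x y xy | hit v vS].
  have yx : e y x by rewrite e_sym.
  rewrite !exists_val_has -[[:: zv y x; _; _]]/(rev (xblock y x)) has_rev.
  by split; [apply: vcs_hits_xblock | apply: vcs_hits_zblock | apply: vcs_hits_xblock].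
have hit_x x y : e x y -> has (mem (val @: S)) (xblock x y).
  by case/hit; rewrite exists_val_has.
have hit_z x y : e x y -> has (mem (val @: S)) (zblock x y).
  by case/hit=> _; rewrite exists_val_has.
case: v vS => -[[x | [x y]] | [[x y] | s]] inGv vS; try exact: linked0.
  exact: (linked_wv e_irr e_sym Hcubic hit_x hit_z vS).
case/existsP: (inGv) => x /existsP[y /andP[xy /eqP sE]].
by apply: (linked_we e_irr e_sym Hcubic hit_x hit_z vS _ xy); rewrite /= sE.
Qed.
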